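(* Let $Q:P\to P$ be a linear operator with $\deg(Qp)=\deg p-1$ for every $p\in P$ (with the convention $\deg 0=-1$, so $Q$ annihilates constants). Write $Qx^n=\sum_{k=1}^{n}b_{n,k}x^{n-k}$ ($b_{n,k}\in\mathbf F$), so that $b_{n,1}\neq 0$ for all $n\ge1$, and assume $b_{1,1}=1$. Then there exist scalars $\{q_k\}_{k\ge2}\subset\mathbf F$ and an admissible sequence $\psi$ such that $$Q=\partial_\psi+\sum_{k\ge2}q_k\,\partial_\psi^{\,k}$$ (as operators on $P$; the sum is finite on each polynomial) if and only if there exists an admissible sequence $\psi$ such that $$b_{n,k}=\binom{n}{k}_{\psi}b_{k,k}\qquad\text{for all } n\ge k\ge 1 .$$ Moreover, if such $\{q_k\}_{k\ge2}$ and $\psi$ exist, they are unique.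
   Context: $\mathbf F$ is a field of characteristic zero and $P=\mathbf F[x]$. An admissible sequence is $\psi=(\psi_n)_{n\ge0}$ with $\psi_n\in\mathbf F$, $\psi_0=1$, $\psi_n\neq0$ for all $n$. Set $0_\psi=0$, $n_\psi=\psi_{n-1}/\psi_n$ for $n\ge1$, $n_\psi!=\psi_n^{-1}=n_\psi(n-1)_\psi\cdots1_\psi$ with $0_\psi!=1$, $n_\psi^{\underline k}=n_\psi(n-1)_\psi\cdots(n-k+1)_\psi$, and $\binom{n}{k}_\psi=n_\psi^{\underline k}/k_\psi!$. The $\psi$-derivative $\partial_\psi$ is the linear operator on $P$ with $\partial_\psi x^n=n_\psi x^{n-1}$ ($n\ge0$). *)

From HB Require Import structures.
From mathcomp Require Import all_boot all_order all_algebra.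
Set Implicit Arguments. Unset Strict Implicit. Unset Printing Implicit Defensive.
Import GRing.Theory.
Local Open Scope ring_scope.

Section PsiCalculus.
Variable F : fieldType.

Definition admissible (psi : nat -> F) : Prop :=
  psi 0%N = 1 /\ forall n, psi n != 0.

Definition psi_num (psi : nat -> F) (n : nat) : F :=
  match n with 0%N => 0 | m.+1 => psi m / psi m.+1 end.

Definition psi_fact (psi : nat -> F) (n : nat) : F := (psi n)^-1.

Definition psi_falling (psi : nat -> F) (n k : nat) : F :=
  \prod_(i < k) psi_num psi (n - i).

Definition psi_binom (psi : nat -> F) (n k : nat) : F :=
  psi_falling psi n k / psi_fact psi k.

Definition psi_deriv (psi : nat -> F) (p : {poly F}) : {poly F} :=
  \poly_(i < (size p).-1) (p`_i.+1 * psi_num psi i.+1).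

Definition bcoef (Q : {poly F} -> {poly F}) (n k : nat) : F :=
  (Q 'X^n)`_(n - k).

End PsiCalculus.

(* Write D^k x^n = n_psi^(k falling) x^(n-k).  Setting c_1 = 1 and c_k = q_k
   (k >= 2), the expansion says that on polynomials of size < N the operator Q
   agrees with the truncated series  sum_(1 <= k < N) c_k D^k.  Both sides being
   linear, Q has such an expansion iff it has it on every monomial x^n, i.e. iff
   its matrix factors as  b_(n,k) = c_k n_psi^(k falling)  (the theorem's degree
   hypothesis makes the coefficients of Q x^n beyond x^(n-1) vanish).
   Taking n = k gives c_k = psi_k b_(k,k), so the factorisation is equivalent to
   b_(n,k) = binom(n,k)_psi b_(k,k); conversely, given such a psi, rescaling
   psi_n to psi_n / psi_1^n leaves the psi-binomials unchanged and forces
   1_psi = 1, hence c_1 = 1.  Uniqueness: b_(n,1) = n_psi determines psi, and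
   b_(k,k) = c_k / psi_k then determines q_k. *)

From HB Require Import structures.
From mathcomp Require Import all_boot all_order all_algebra zify.
From Stdlib Require Import FunctionalExtensionality.
Import GRing.Theory.
Set Implicit Arguments. Unset Strict Implicit. Unset Printing Implicit Defensive.
Local Open Scope ring_scope.

Section PsiDerivative.
Variables (F : fieldType) (psi : nat -> F).

Lemma coef_psi_deriv (p : {poly F}) i :
  (psi_deriv psi p)`_i = p`_i.+1 * psi_num psi i.+1.
Proof.
rewrite /psi_deriv coef_poly; case: ltnP => // hi.
by rewrite nth_default ?mul0r // (leq_trans (leqSpred _)).
Qed.

Lemma coef_iter_psi_deriv k (p : {poly F}) i :
  (iter k (psi_deriv psi) p)`_i = p`_(i + k) * psi_falling psi (i + k) k.
Proof.
elim: k i => [|k IH] i /=; first by rewrite addn0 /psi_falling big_ord0 mulr1.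
rewrite coef_psi_deriv IH /psi_falling big_ord_recr /= addnS -addSn addnK.
by rewrite -mulrA.
Qed.

Lemma iter_psi_deriv_small k (p : {poly F}) :
  (size p <= k)%N -> iter k (psi_deriv psi) p = 0.
Proof.
move=> hk; apply/polyP => i; rewrite coef_iter_psi_deriv coef0.
by rewrite nth_default ?mul0r // (leq_trans hk) ?leq_addl.
Qed.

Lemma psi_deriv_linear : linear (psi_deriv psi).
Proof.
move=> a u v; apply/polyP => i.
by rewrite coefD coefZ !coef_psi_deriv coefD coefZ mulrDl mulrA.
Qed.

Lemma psi_falling1 n : psi_falling psi n 1 = psi_num psi n.
Proof. by rewrite /psi_falling big_ord1 subn0. Qed.

(* The telescoping product  k_psi^(k falling) = k_psi! = 1/psi_k. *)
Lemma psi_falling_diag k : admissible psi -> psi_falling psi k k = (psi k)^-1.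
Proof.
move=> [psi0 psi_neq0].
elim: k => [|k IH]; first by rewrite /psi_falling big_ord0 psi0 invr1.
rewrite /psi_falling big_ord_recl subn0 /=.
under eq_bigr do rewrite subSS.
by rewrite -/(psi_falling psi k k) IH mulrAC mulfV ?mul1r.
Qed.

End PsiDerivative.

Lemma psi_binomE (F : fieldType) (psi : nat -> F) n k :
  psi_binom psi n k = psi_falling psi n k * psi k.
Proof. by rewrite /psi_binom /psi_fact invrK. Qed.

Section Rescaling.
Variables (F : fieldType) (psi : nat -> F) (c : F).
Hypothesis c_neq0 : c != 0.

(* Replacing psi_n by psi_n / c^n multiplies every n_psi by c; it is used to
   normalise 1_psi to 1 without changing the psi-binomial coefficients. *)
Definition psi_rescale (n : nat) : F := psi n / c ^+ n.

Lemma psi_rescale_admissible : admissible psi -> admissible psi_rescale.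
Proof.
move=> [psi0 psi_neq0]; split; first by rewrite /psi_rescale psi0 expr0 divr1.
by move=> n; rewrite mulf_neq0 // invr_eq0 expf_neq0.
Qed.

Lemma psi_num_rescale n : psi_num psi_rescale n = psi_num psi n * c.
Proof.
case: n => [|n] /=; first by rewrite mul0r.
rewrite /psi_rescale invf_div exprS [c * _]mulrC !mulrA divfK ?expf_neq0 //.
by rewrite mulrAC.
Qed.

Lemma psi_falling_rescale n k :
  psi_falling psi_rescale n k = psi_falling psi n k * c ^+ k.
Proof.
rewrite /psi_falling; under eq_bigr do rewrite psi_num_rescale.
by rewrite big_split /= prodr_const card_ord.
Qed.

Lemma psi_binom_rescale n k : psi_binom psi_rescale n k = psi_binom psi n k.
Proof.
rewrite !psi_binomE psi_falling_rescale /psi_rescale mulrA.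
by rewrite mulrAC mulfK ?expf_neq0.
Qed.

End Rescaling.

Lemma admissible_eq (F : fieldType) (psi1 psi2 : nat -> F) :
  admissible psi1 -> admissible psi2 ->
  (forall n, psi_num psi1 n.+1 = psi_num psi2 n.+1) -> psi1 = psi2.
Proof.
move=> [psi10 psi1_neq0] [psi20 psi2_neq0] hnum.
apply: functional_extensionality; elim=> [|n IH]; first by rewrite psi10 psi20.
have := hnum n; rewrite /= IH => /(mulfI (psi2_neq0 n)).
exact: invr_inj.
Qed.

Lemma linear_expand (F : fieldType) (f : {poly F} -> {poly F}) :
  linear f -> forall p, f p = \sum_(n < size p) p`_n *: f 'X^n.
Proof.
move=> f_lin p; have f0 : f 0 = 0.
  have := f_lin 1 0 0; rewrite scaler0 addr0 scale1r -{1}[f 0]addr0.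
  by move/(addrI (f 0))/esym.
rewrite -{1}[p]coefK poly_def.
by apply: (big_rec2 (fun u v => f u = v)) => // n u _ _ <-; apply: f_lin.
Qed.

Lemma iter_linear (F : fieldType) (f : {poly F} -> {poly F}) k :
  linear f -> linear (iter k f).
Proof. by move=> f_lin; elim: k => [//|k IH] a u v /=; rewrite IH f_lin. Qed.

Section PsiSeries.
Variables (F : fieldType) (q psi : nat -> F).

Definition series_coef (k : nat) : F := if k == 1%N then 1 else q k.

Definition psi_series (N : nat) (p : {poly F}) : {poly F} :=
  \sum_(1 <= k < N) series_coef k *: iter k (psi_deriv psi) p.

Lemma psi_series_linear N : linear (psi_series N).
Proof.
move=> a u v; rewrite /psi_series scaler_sumr -big_split; apply: eq_bigr => k _.
by rewrite (iter_linear _ (@psi_deriv_linear _ psi)) scalerDr !scalerA mulrC.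
Qed.

(* On p, the operator  D + sum_(k>=2) q_k D^k  is the truncated series of
   length size p + 1, since D^k p = 0 for k >= size p. *)
Lemma psi_expansionE (p : {poly F}) :
  psi_deriv psi p + \sum_(2 <= k < size p) q k *: iter k (psi_deriv psi) p
  = psi_series (size p).+1 p.
Proof.
rewrite /psi_series; have [small|large] := leqP (size p) 1.
  rewrite big_geq ?(leq_trans small) // addr0 big1_seq.
    exact: (@iter_psi_deriv_small _ psi 1 p).
  move=> k; rewrite mem_index_iota => /andP[_ /andP[hk _]].
  by rewrite iter_psi_deriv_small ?scaler0 // (leq_trans small).
rewrite [in RHS]big_ltn; last by rewrite ltnS ltnW.
rewrite /series_coef /= scale1r [in RHS]big_nat_recr //=.
rewrite iter_psi_deriv_small // scaler0 addr0; congr (_ + _).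
by apply: eq_big_nat => k /andP[hk _]; case: eqP hk => // ->.
Qed.

Lemma coef_psi_series_Xn N n j : (n < N)%N ->
  (psi_series N 'X^n)`_j =
    if (j < n)%N then series_coef (n - j) * psi_falling psi n (n - j) else 0.
Proof.
move=> hnN; rewrite /psi_series coef_sum.
under eq_bigr do rewrite coefZ coef_iter_psi_deriv coefXn.
case: ltnP => hj.
  rewrite (bigD1_seq (n - j)%N) ?iota_uniq //=; last first.
    by rewrite mem_index_iota subn_gt0 hj (leq_ltn_trans (leq_subr _ _)).
  rewrite (subnKC (ltnW hj)) eqxx mul1r big1 ?addr0 // => k hk.
  suff /negbTE -> : (j + k != n)%N by rewrite mul0r mulr0.
  by apply: contra hk => /eqP <-; rewrite addKn.
rewrite big1_seq // => k; rewrite mem_index_iota => /andP[_ /andP[hk _]].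
suff /negbTE -> : (j + k != n)%N by rewrite mul0r mulr0.
by apply/eqP; lia.
Qed.

End PsiSeries.

Section Expansion.
Variable F : fieldType.

Definition psi_expansion (Q : {poly F} -> {poly F}) (q psi : nat -> F) : Prop :=
  forall p : {poly F},
    Q p = psi_deriv psi p + \sum_(2 <= k < size p) q k *: iter k (psi_deriv psi) p.

Lemma psi_expansion_bcoef (Q : {poly F} -> {poly F}) q psi :
  psi_expansion Q q psi -> forall n k, (1 <= k <= n)%N ->
  bcoef Q n k = series_coef q k * psi_falling psi n k.
Proof.
move=> hQ n k /andP[hk hkn].
rewrite /bcoef hQ psi_expansionE size_polyXn coef_psi_series_Xn //.
by rewrite ifT ?subKn // ltn_subrL hk (leq_trans hk hkn).
Qed.

Lemma bcoef_psi_expansion (Q : {linear {poly F} -> {poly F}}) q psi :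
  (forall p, size (Q p) = (size p).-1) ->
  (forall n k, (1 <= k <= n)%N -> bcoef Q n k = series_coef q k * psi_falling psi n k) ->
  psi_expansion Q q psi.
Proof.
move=> hdeg hb p; rewrite psi_expansionE (linear_expand (@linearP _ _ _ _ Q)).
rewrite [RHS](linear_expand (psi_series_linear q psi _)).
apply: eq_bigr => n _; congr (_ *: _); apply/polyP => j.
rewrite coef_psi_series_Xn; last exact: leqW (ltn_ord n).
case: ltnP => hj.
  by rewrite -hb /bcoef ?(subKn (ltnW hj)) // subn_gt0 hj leq_subr.
by rewrite nth_default // hdeg size_polyXn.
Qed.

End Expansion.

Section BinomialForm.
Variables (F : fieldType) (b : nat -> nat -> F) (psi : nat -> F).
Hypothesis psi_adm : admissible psi.

(* If  b_(n,k) = c_k n_psi^(k falling)  then, taking n = k,  c_k = psi_k b_(k,k),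
   i.e.  b_(n,k) = binom(n,k)_psi b_(k,k). *)
Lemma binomial_form (c : nat -> F) :
  (forall n k, (1 <= k <= n)%N -> b n k = c k * psi_falling psi n k) ->
  forall n k, (1 <= k <= n)%N -> b n k = psi_binom psi n k * b k k.
Proof.
move=> hb n k /andP[hk hkn]; rewrite hb ?hk // (hb k k) ?hk ?leqnn //.
by rewrite psi_falling_diag // psi_binomE mulrA mulrAC mulfK ?psi_adm.2 // mulrC.
Qed.

(* Conversely, if  b_(n,k) = binom(n,k)_psi b_(k,k)  and  b_(1,1) = 1, then after
   normalising psi so that 1_psi = 1, b factors as  c_k n_psi^(k falling)  with
   c_k = psi_k b_(k,k), a coefficient sequence with c_1 = 1. *)
Lemma factor_of_binomial_form :
  b 1 1 = 1 ->
  (forall n k, (1 <= k <= n)%N -> b n k = psi_binom psi n k * b k k) ->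
  let psi' := psi_rescale psi (psi 1) in
  forall n k, (1 <= k <= n)%N ->
    b n k = series_coef (fun k => psi' k * b k k) k * psi_falling psi' n k.
Proof.
move=> b11 hb psi' n k hk; have psi1_neq0 : psi 1 != 0 := psi_adm.2 1%N.
rewrite hb // -(psi_binom_rescale _ psi1_neq0) psi_binomE /series_coef.
case: eqP => [->|_]; last by rewrite -mulrA mulrC.
by rewrite b11 mulr1 mul1r /psi' /psi_rescale expr1 divff // mulr1.
Qed.

End BinomialForm.

Theorem mainTheorem1 (F : fieldType) (charF0 : [pchar F] =i pred0)
    (Q : {linear {poly F} -> {poly F}})
    (hdeg : forall p : {poly F}, size (Q p) = (size p).-1)
    (hb11 : bcoef Q 1 1 = 1) :
  ((exists (q : nat -> F) (psi : nat -> F), admissible psi /\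
      forall p : {poly F},
        Q p = psi_deriv psi p
              + \sum_(2 <= k < size p) q k *: iter k (psi_deriv psi) p)
   <->
   (exists psi : nat -> F, admissible psi /\
      forall n k : nat, (1 <= k <= n)%N ->
        bcoef Q n k = psi_binom psi n k * bcoef Q k k))
  /\
  (forall (q1 q2 psi1 psi2 : nat -> F),
      admissible psi1 ->
      (forall p : {poly F},
        Q p = psi_deriv psi1 p
              + \sum_(2 <= k < size p) q1 k *: iter k (psi_deriv psi1) p) ->
      admissible psi2 ->
      (forall p : {poly F},
        Q p = psi_deriv psi2 p
              + \sum_(2 <= k < size p) q2 k *: iter k (psi_deriv psi2) p) ->
      psi1 = psi2 /\ (forall k, (2 <= k)%N -> q1 k = q2 k)).
Proof.
split.
  split=> [[q [psi [psi_adm hQ]]]|[psi [psi_adm hb]]].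
    exists psi; split=> //.
    exact: binomial_form psi_adm _ (psi_expansion_bcoef hQ).
  have psi1_neq0 : psi 1 != 0 := psi_adm.2 1%N.
  exists (fun k => psi_rescale psi (psi 1) k * bcoef Q k k), (psi_rescale psi (psi 1)).
  split; first exact: psi_rescale_admissible.
  exact/(bcoef_psi_expansion hdeg)/factor_of_binomial_form.
move=> q1 q2 psi1 psi2 adm1 /psi_expansion_bcoef b1 adm2 /psi_expansion_bcoef b2.
(* b_(n,1) = n_psi recovers psi; b_(k,k) = c_k / psi_k then recovers q_k. *)
have psi12 : psi1 = psi2.
  apply: admissible_eq => // n.
  by have := b1 n.+1 1%N isT; rewrite b2 // /series_coef /= !mul1r !psi_falling1.
subst psi2; split=> // k hk; have hkk : (1 <= k <= k)%N by rewrite ltnW ?leqnn.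
have := b1 k k hkk; rewrite b2 // psi_falling_diag // /series_coef gtn_eqF //.
by move/(mulIf (invr_neq0 (adm1.2 k))) ->.
Qed.
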